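(* Let $(\Gamma,\mathcal M)$ be a linear matrix problem with $\Gamma\subset k^{t\times t}$, and let the free and dependent positions and the coefficients $c^{(l,r)}_{ij}$ be as in the context. Then for every step-sequence $\underline n$, the space $\mathcal M_{\underline n\times\underline n}$ consists of all $\underline n\times\underline n$ matrices $[M_{ij}]_{i,j=1}^t$ whose free blocks are arbitrary and whose dependent blocks are given by $M_{lr}=\sum_{(i,j)\in\mathcal N_f}c^{(l,r)}_{ij}M_{ij}$ for $(l,r)\in\mathcal N_d$. Moreover, when Belitskiĭ's algorithm is applied to $M\in\mathcal M_{\underline n\times\underline n}$ with $\Lambda=\Gamma_{\underline n\times\underline n}$, at each step the block that is reduced (the first non-stable block of the current partition) is a subblock of a free block $M_{ij}$, $(i,j)\in\mathcal N_f$, of $M$.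
   Context: Throughout, $k$ is an algebraically closed field with a fixed linear order $\prec$. For $\underline n=(n_1,\dots,n_t)$, an $\underline n\times\underline n$ matrix is $M=[M_{ij}]$ with $M_{ij}\in k^{n_i\times n_j}$. A reduced $\underline n\times\underline n$ algebra is an algebra $\Lambda$ of $\underline n\times\underline n$ matrices for which there are an equivalence relation $\sim$ on $\{1,\dots,t\}$ and, for each pair of classes $(\mathcal I,\mathcal J)$, a system $\sum_{\mathcal I\ni i<j\in\mathcal J}c^{(l)}_{ij}x_{ij}=0$, such that $\Lambda$ is exactly the set of upper block-triangular $S$ with $S_{ii}=S_{jj}$ for $i\sim j$ and $\sum c^{(l)}_{ij}S_{ij}=0$. $\Lambda^*$: invertible elements. Weyr matrices: $W=W_{\{\lambda_1\}}\oplus\dots\oplus W_{\{\lambda_r\}}$, $\lambda_1\prec\dots\prec\lambda_r$, $W_{\{\lambda_i\}}$ block upper triangular with diagonal blocks $\lambda_iI_{m_{i1}},\dots,\lambda_iI_{m_{ik_i}}$ ($m_{i1}\ge\dots\ge m_{ik_i}\ge1$), superdiagonal blocks $\begin{bmatrix}I\\0\end{bmatrix}$, other blocks $0$; standard partition: for $W_{\{\lambda_i\}}$, block sizes $m_{i1}-m_{i2},\dots,m_{ik_i};\ m_{i2}-m_{i3},\dots,m_{ik_i};\dots;m_{ik_i}$ with zeros removed. Belitskiĭ's algorithm for $(M,\Lambda)$: a block $M_{ij}$ is stable if $(S^{-1}MS)_{ij}=M_{ij}$ for all $S\in\Lambda^*$ (then $M_{ij}=a_{ij}I$ if $i\sim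 j$, $M_{ij}=0=:a_{ij}$ otherwise). If all blocks are stable, stop. Else order blocks $M_{t1}<\dots<M_{tt}<M_{t-1,1}<\dots<M_{1t}$, take the first non-stable block $M_{lr}$ (this is the block reduced at this step), with classes $\mathcal I\ni l,\mathcal J\ni r$, and let $( * )$ be $a_{l1}S_{1r}+\dots+a_{l,r-1}S_{r-1,r}=S_{l,l+1}a_{l+1,r}+\dots+S_{lt}a_{tr}$. Case I ($( * )$ not implied by the equations of $\Lambda$ for $(\mathcal I,\mathcal J)$): $M'=S^{-1}MS$, $S\in\Lambda^*$ with identity diagonal blocks, $M'_{lr}=0$; partition unchanged. Case II ($( * )$ implied, $l\not\sim r$): $M'=S^{-1}MS$ with $M'_{lr}=\begin{bmatrix}0&I\\0&0\end{bmatrix}$; strips equivalent to $l$ (resp. $r$) subdivided conformally with the rows (resp. columns) of this block. Case III ($( * )$ implied, $l\sim r$): $M'=S^{-1}MS$ with $M'_{lr}$ a Weyr matrix; strips equivalent to $l$ subdivided by its standard partition. Then $\Lambda'=\{S\in\Lambda\mid(SM')_{lr}=(M'S)_{lr}\}$ (reduced for the refined partition); repeat with $(M',\Lambda')$ until all blocks are stable. Linear matrix problems. A basic matrix algebra is a subalgebra $\Gamma\subset k^{t\times t}$ (with $I_t$) of upper triangular matrices containing the diagonal part of each of its elements; it is a reduced $(1,\dots,1)\times(1,\dots,1)$ algebra with an equivalence relation $\sim$ and equations. A linear matrix problem is a pair $(\Gamma,\mathcal M)$, $\mathcal M\subset k^{t\times t}$ a subspace with $\Gamma\mathcal M,\mathcal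 M\Gamma\subset\mathcal M$; $\mathcal M$ is the set of all $[m_{ij}]$ satisfying a linear system whose equations each involve only unknowns $x_{ij}$ with $(i,j)\in\mathcal I\times\mathcal J$ for one pair of classes. A step-sequence is $\underline n$ with $n_i=n_j$ for $i\sim j$; $\Gamma_{\underline n\times\underline n}$ is the reduced $\underline n\times\underline n$ algebra with the same $\sim$ and equations as $\Gamma$; $\mathcal M_{\underline n\times\underline n}$ is the space of $\underline n\times\underline n$ matrices whose blocks satisfy the system defining $\mathcal M$ (with blocks $M_{ij}$ in place of $x_{ij}$). Free and dependent blocks. Order the unknowns as $x_{t1}\lhd x_{t2}\lhd\dots\lhd x_{tt}\lhd x_{t-1,1}\lhd\dots\lhd x_{t-1,t}\lhd\dots\lhd x_{1t}$. Gauss–Jordan elimination of the system defining $\mathcal M$, eliminating starting with the $\lhd$-last unknown, brings it to the form $x_{lr}=\sum_{(i,j)\in\mathcal N_f}c^{(l,r)}_{ij}x_{ij}$, $(l,r)\in\mathcal N_d$, where $\mathcal N_d\cup\mathcal N_f=\{1,\dots,t\}^2$, $\mathcal N_d\cap\mathcal N_f=\varnothing$, and $c^{(l,r)}_{ij}\ne0$ implies $i\sim l$, $j\sim r$ and $x_{ij}\lhd x_{lr}$. A block $M_{ij}$ of an $\underline n\times\underline n$ matrix is free if $(i,j)\in\mathcal N_f$ and dependent if $(i,j)\in\mathcal N_d$. *)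

From HB Require Import structures.
From mathcomp Require Import all_boot all_order all_algebra.
Set Implicit Arguments. Unset Strict Implicit. Unset Printing Implicit Defensive.
Import Order.TTheory GRing.Theory.
Local Open Scope ring_scope.

Section Defs.
Variable k : closedFieldType.

(* A partition is a sequence of strip sizes s; strip u occupies positions
   soff s u, ..., soff s u + sz s u - 1 (all indices 0-based). *)
Definition soff (s : seq nat) (u : nat) : nat := sumn (take u s).
Definition sz (s : seq nat) (u : nat) : nat := nth 0%N s u.
(* index of the strip containing position p *)
Definition sidx (s : seq nat) (p : nat) : nat :=
  count (fun u => sumn (take u.+1 s) <= p)%N (iota 0 (size s)).

(* entry (p,q) of a matrix, 0 out of range *)
Definition ent N (A : 'M[k]_N) (p q : nat) : k :=
  match (insub p : option 'I_N), (insub q : option 'I_N) with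
  | Some i, Some j => A i j
  | _, _ => 0
  end.

(* block (i,j) of A w.r.t. partition s, as a function of in-block offsets *)
Definition blk N (s : seq nat) (A : 'M[k]_N) (i j : nat) (a b : nat) : k :=
  ent A (soff s i + a) (soff s j + b).

(* equivalence E on 'I_t, equations of Gamma / of M given as coefficient
   matrices (equation c : sum_{ij} c i j x_ij = 0). *)
Definition Gamma t (E : rel 'I_t) (geqs : seq 'M[k]_t) (A : 'M[k]_t) : Prop :=
  (forall i j : 'I_t, (j < i)%N -> A i j = 0) /\
  (forall i j : 'I_t, E i j -> A i i = A j j) /\
  (forall c, c \in geqs -> \sum_(i : 'I_t) \sum_(j : 'I_t) c i j * A i j = 0).

Definition Mset t (meqs : seq 'M[k]_t) (m : 'M[k]_t) : Prop :=
  forall d, d \in meqs -> \sum_(i : 'I_t) \sum_(j : 'I_t) d i j * m i j = 0.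

Definition Gamma_nn t (E : rel 'I_t) (geqs : seq 'M[k]_t) (ns : seq nat)
  (S : 'M[k]_(sumn ns)) : Prop :=
  (forall i j : 'I_t, (j < i)%N -> forall a b, (a < sz ns i)%N -> (b < sz ns j)%N ->
      blk ns S i j a b = 0) /\
  (forall i j : 'I_t, E i j -> forall a b, (a < sz ns i)%N -> (b < sz ns i)%N ->
      blk ns S i i a b = blk ns S j j a b) /\
  (forall c, c \in geqs -> forall a b,
      (forall i j : 'I_t, c i j != 0 -> (a < sz ns i)%N && (b < sz ns j)%N) ->
      \sum_(i : 'I_t) \sum_(j : 'I_t) c i j * blk ns S i j a b = 0).

Definition M_nn t (meqs : seq 'M[k]_t) (ns : seq nat) (A : 'M[k]_(sumn ns)) : Prop :=
  forall d, d \in meqs -> forall a b,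
    (forall i j : 'I_t, d i j != 0 -> (a < sz ns i)%N && (b < sz ns j)%N) ->
    \sum_(i : 'I_t) \sum_(j : 'I_t) d i j * blk ns A i j a b = 0.

Definition lhd t (i j l r : 'I_t) : bool := (l < i)%N || ((i == l) && (j < r)%N).

Section Alg.
Variable N : nat.
Implicit Types (s : seq nat) (M S : 'M[k]_N) (L : 'M[k]_N -> Prop).

Definition stable s M L (i j : nat) : Prop :=
  forall S, L S -> S \in unitmx -> forall a b, (a < sz s i)%N -> (b < sz s j)%N ->
    blk s (invmx S *m M *m S) i j a b = blk s M i j a b.

Definition equivs s L (i j : nat) : Prop :=
  sz s i = sz s j /\
  forall S, L S -> forall a b, (a < sz s i)%N -> (b < sz s i)%N ->
    blk s S i i a b = blk s S j j a b.

(* (l,r) is the first non-stable block in the order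
   M_{t1} < ... < M_{tt} < M_{t-1,1} < ... < M_{1t} *)
Definition firstns s M L (l r : nat) : Prop :=
  (l < size s)%N /\ (r < size s)%N /\ ~ stable s M L l r /\
  forall l' r', (l' < size s)%N -> (r' < size s)%N ->
    ((l < l')%N \/ (l' = l /\ (r' < r)%N)) -> stable s M L l' r'.

(* the equation (star) is implied by (holds on) L:
   sum_{i<r} M_{li} S_{ir} = sum_{j>l} S_{lj} M_{jr} *)
Definition star s M L (l r : nat) : Prop :=
  forall S, L S -> forall a b, (a < sz s l)%N -> (b < sz s r)%N ->
    \sum_(i < r) \sum_(c < sz s i) blk s M l i a c * blk s S i r c b =
    \sum_(l.+1 <= j < size s) \sum_(c < sz s j) blk s S l j a c * blk s M j r c b.

Definition subdiv s (P1 : nat -> Prop) (parts1 : seq nat)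
    (P2 : nat -> Prop) (parts2 : seq nat) (s' : seq nat) : Prop :=
  exists parts : seq (seq nat),
    size parts = size s /\ s' = flatten parts /\
    forall i, (i < size s)%N ->
      (P1 i -> nth [::] parts i = filter (fun x => 0 < x)%N parts1) /\
      (P2 i -> nth [::] parts i = filter (fun x => 0 < x)%N parts2) /\
      (~ P1 i -> ~ P2 i -> nth [::] parts i = [:: sz s i]).

Definition Lnext s L M' (l r : nat) : 'M[k]_N -> Prop :=
  fun S => L S /\ forall a b, (a < sz s l)%N -> (b < sz s r)%N ->
    blk s (S *m M') l r a b = blk s (M' *m S) l r a b.

End Alg.

(* data: list of (lambda_i, [m_i1; ...; m_ik]) *)
Definition weyr1 (lam : k) (ms : seq nat) (p q : nat) : k :=
  let u := sidx ms p in let v := sidx ms q in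
  let a := (p - soff ms u)%N in let b := (q - soff ms v)%N in
  if (u == v) && (a == b) then lam
  else if (v == u.+1) && (a == b) then 1 else 0.

Definition weyr (data : seq (k * seq nat)) (p q : nat) : k :=
  let bs := map (fun d => sumn d.2) data in
  let u := sidx bs p in let v := sidx bs q in
  if u == v then weyr1 (nth 0 (map fst data) u) (nth [::] (map snd data) u)
                       (p - soff bs u) (q - soff bs u)
  else 0.

Definition weyr_ok (lt : rel k) (data : seq (k * seq nat)) : bool :=
  sorted lt (map fst data) &&
  all (fun d => (d.2 != [::]) && sorted geq d.2 && all (fun x => 0 < x)%N d.2) data.

Definition weyr_size (data : seq (k * seq nat)) : nat :=
  sumn (map (fun d => sumn d.2) data).

Definition std1 (ms : seq nat) : seq nat :=
  flatten [seq [seq (nth 0 ms j - nth 0 ms j.+1)%N | j <- iota i (size ms - i)]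
          | i <- iota 0 (size ms)].
Definition stdpart (data : seq (k * seq nat)) : seq nat :=
  filter (fun x => 0 < x)%N (flatten (map (fun d => std1 d.2) data)).

Definition bstep (lt : rel k) N (s : seq nat) (M : 'M[k]_N) (L : 'M[k]_N -> Prop)
    (s' : seq nat) (M' : 'M[k]_N) (L' : 'M[k]_N -> Prop) : Prop :=
  exists l r, firstns s M L l r /\ L' = Lnext s L M' l r /\
  exists S, L S /\ S \in unitmx /\ M' = invmx S *m M *m S /\
  [\/
      ~ star s M L l r /\
      (forall i a b, (i < size s)%N -> (a < sz s i)%N -> (b < sz s i)%N ->
          blk s S i i a b = (a == b)%:R) /\
      (forall a b, (a < sz s l)%N -> (b < sz s r)%N -> blk s M' l r a b = 0) /\
      s' = s,
      star s M L l r /\ ~ equivs s L l r /\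
      exists rk, (rk <= minn (sz s l) (sz s r))%N /\
      (forall a b, (a < sz s l)%N -> (b < sz s r)%N ->
          blk s M' l r a b = ((a < rk)%N && (b == sz s r - rk + a)%N)%:R) /\
      subdiv s (fun i => equivs s L i l) [:: rk; sz s l - rk]%N
               (fun i => equivs s L i r) [:: sz s r - rk; rk]%N s'
    |
      star s M L l r /\ equivs s L l r /\
      exists data, weyr_ok lt data /\ weyr_size data = sz s l /\
      (forall a b, (a < sz s l)%N -> (b < sz s r)%N ->
          blk s M' l r a b = weyr data a b) /\
      subdiv s (fun i => equivs s L i l) (stdpart data) (fun _ => False) [::] s'].

Inductive reach (lt : rel k) N (s0 : seq nat) (M0 : 'M[k]_N) (L0 : 'M[k]_N -> Prop)
  : seq nat -> 'M[k]_N -> ('M[k]_N -> Prop) -> Prop :=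
| reach0 : reach lt s0 M0 L0 s0 M0 L0
| reachS s M L s' M' L' : reach lt s0 M0 L0 s M L -> bstep lt s M L s' M' L' ->
    reach lt s0 M0 L0 s' M' L'.

End Defs.

(* Γ_{n×n} and M_{n×n} are cut out blockwise, so they are described slice by
   slice: for offsets (a, b), the t×t matrix [slice A a b] of the (a, b) entries
   of all blocks of A must lie in Γ (resp. M), and a slice of a product is a sum
   of products of slices.  Hence Γ_{n×n} is an algebra closed under inversion,
   M_{n×n} is a Γ_{n×n}-bimodule, and the free/dependent description of M_{n×n}
   is the Gauss-Jordan form of M applied to every slice.
   Along Belitskiĭ's algorithm the partition is only refined, the matrix stays in
   M_{n×n} (it is conjugated by units of Λ ⊆ Γ_{n×n}) and Λ stays inside Γ_{n×n}.
   If the first non-stable block lay in a dependent block M_{l0 r0}, each of its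
   entries would be a combination of entries of free blocks M_{ij} with
   x_{ij} ⊲ x_{l0 r0}; these lie in blocks of the current partition preceding the
   reduced one, hence stable, so the entry would be invariant under conjugation. *)

From HB Require Import structures.
From mathcomp Require Import all_boot all_order all_algebra zify.
From Stdlib Require Import Classical_Prop.
Import Order.TTheory GRing.Theory.
Local Open Scope ring_scope.
Set Implicit Arguments. Unset Strict Implicit.

Section Strips.
Implicit Types (s : seq nat) (u v : nat).

Lemma soff0 s : soff s 0 = 0%N.
Proof. by rewrite /soff take0. Qed.

Lemma soff_cons a s u : soff (a :: s) u.+1 = (a + soff s u)%N.
Proof. by []. Qed.

Lemma soffS s u : soff s u.+1 = (soff s u + sz s u)%N.
Proof.
rewrite /soff /sz; case: (ltnP u (size s)) => hu.
  by rewrite (take_nth 0%N hu) sumn_rcons.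
by rewrite !take_oversize ?nth_default ?addn0 // (leq_trans hu).
Qed.

Lemma leq_soff s u v : (u <= v)%N -> (soff s u <= soff s v)%N.
Proof.
move=> /subnK <-; elim: (v - u)%N => [|d IH] //=.
by rewrite addSn soffS (leq_trans IH) ?leq_addr.
Qed.

Lemma soff_le_sumn s u : (soff s u <= sumn s)%N.
Proof. by rewrite /soff -{2}(cat_take_drop u s) sumn_cat leq_addr. Qed.

Lemma strip_end_le_sumn s u : (soff s u + sz s u <= sumn s)%N.
Proof. by rewrite -soffS soff_le_sumn. Qed.

Lemma sz_le_sumn s u : (sz s u <= sumn s)%N.
Proof. by rewrite (leq_trans _ (strip_end_le_sumn s u)) // leq_addl. Qed.

Lemma strip_end_le s u v : (u < v)%N -> (soff s u + sz s u <= soff s v)%N.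
Proof. by move=> h; rewrite -soffS leq_soff. Qed.

Lemma big_strips (R : nmodType) s (F : nat -> R) :
  \sum_(0 <= p < sumn s) F p = \sum_(u < size s) \sum_(c < sz s u) F (soff s u + c)%N.
Proof.
elim: s F => [|a s IH] F /=; first by rewrite big_geq // big_ord0.
rewrite (big_cat_nat _ (n := a)) ?leq_addr //= big_ord_recl /=.
congr (_ + _); first by rewrite big_mkord; apply: eq_bigr => c _; rewrite soff0.
rewrite -{1}(add0n a) big_addn addKn IH; apply: eq_bigr => u _.
by apply: eq_bigr => c _; rewrite /bump /= add1n soff_cons addnC addnA.
Qed.

Definition in_strip s u p : bool := (soff s u <= p < soff s u + sz s u)%N.

Lemma in_strip_leq s u v p q :
  in_strip s u p -> in_strip s v q -> (p <= q)%N -> (u <= v)%N.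
Proof.
move=> /andP [hu1 hu2] /andP [hv1 hv2] hpq; rewrite leqNgt; apply/negP => hvu.
have := strip_end_le s hvu; lia.
Qed.

Lemma in_strip_inj s u v p : in_strip s u p -> in_strip s v p -> u = v.
Proof.
move=> hu hv; apply/eqP; rewrite eqn_leq.
by rewrite (in_strip_leq hu hv) ?(in_strip_leq hv hu).
Qed.

Lemma exists_in_strip s p :
  (p < sumn s)%N -> exists2 u, (u < size s)%N & in_strip s u p.
Proof.
elim: s p => [|a s IH] p //= hp; rewrite /in_strip.
have [hpa|hap] := ltnP p a; first by exists 0%N; rewrite // soff0 /sz /= hpa.
have [|u hu /andP [h1 h2]] := IH (p - a)%N; first lia.
by exists u.+1; rewrite // soff_cons /sz /=; rewrite /sz in h2; apply/andP; lia.
Qed.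

End Strips.

Section Refinement.
Implicit Types (s : seq nat) (u v : nat).

Definition sub_strip s' v s u : Prop :=
  (soff s u <= soff s' v)%N /\ (soff s' v + sz s' v <= soff s u + sz s u)%N.

Lemma in_sub_strip s' v s u p :
  sub_strip s' v s u -> in_strip s' v p -> in_strip s u p.
Proof. by move=> [h1 h2] /andP [h3 h4]; apply/andP; lia. Qed.

Lemma sub_strip_lt s' s v l u w : (0 < sz s' v)%N ->
  sub_strip s' v s u -> sub_strip s' l s w -> (u < w)%N -> (v < l)%N.
Proof.
move=> hv [hv1 hv2] [hl1 hl2] huw; rewrite ltnNge; apply/negP => hlv.
have := leq_soff s' hlv; have := strip_end_le s huw; lia.
Qed.

(* Empty strips of [s'] are irrelevant and may sit anywhere. *)
Definition refines s' s : Prop :=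
  sumn s' = sumn s /\
  forall v, (v < size s')%N -> (0 < sz s' v)%N ->
    exists2 u, (u < size s)%N & sub_strip s' v s u.

Lemma refines_refl s : refines s s.
Proof. by split => // v hv _; exists v => //; split. Qed.

Lemma refines_trans s1 s2 s3 : refines s1 s2 -> refines s2 s3 -> refines s1 s3.
Proof.
move=> [e12 h12] [e23 h23]; split; first by rewrite e12.
move=> v hv hpos; have [v' hv' [i1 i2]] := h12 v hv hpos.
have [|u hu [j1 j2]] := h23 v' hv'; first lia.
by exists u => //; split; lia.
Qed.

Lemma refines_in_strip s' s v u p : refines s' s -> (v < size s')%N ->
  in_strip s' v p -> in_strip s u p -> sub_strip s' v s u.
Proof.
move=> [_ hs] hv hp hup; have [|u' _ hsub] := hs v hv.
  by move: hp => /andP [? ?]; lia.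
by rewrite (in_strip_inj hup (in_sub_strip hsub hp)).
Qed.

Lemma refines_precedes s' s l r v w l0 r0 i j p P Q :
  refines s' s -> (v < size s')%N -> (w < size s')%N ->
  sub_strip s' l s l0 -> sub_strip s' r s r0 -> in_strip s' l p ->
  P = (soff s i + (p - soff s l0))%N ->
  in_strip s i P -> in_strip s j Q -> in_strip s' v P -> in_strip s' w Q ->
  (l0 < i)%N || (i == l0) && (j < r0)%N -> (l < v)%N \/ v = l /\ (w < r)%N.
Proof.
move=> hs hv hw hl hr hp eP hiP hjQ hvP hwQ /orP [hi|/andP [/eqP ei hj]].
  left; apply: sub_strip_lt hl (refines_in_strip hs hv hvP hiP) hi.
  by move: hp => /andP [? ?]; lia.
right; split.
  have ePp : P = p by move: hl hp => [? ?] /andP [? ?]; rewrite eP ei; lia.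
  by apply: in_strip_inj hvP _; rewrite ePp.
apply: sub_strip_lt (refines_in_strip hs hw hwQ hjQ) hr hj.
by move: hwQ => /andP [? ?]; lia.
Qed.

Lemma soff_catl s1 s2 v : (v < size s1)%N -> soff (s1 ++ s2) v = soff s1 v.
Proof. by move=> hv; rewrite /soff take_cat hv. Qed.

Lemma sz_catl s1 s2 v : (v < size s1)%N -> sz (s1 ++ s2) v = sz s1 v.
Proof. by move=> hv; rewrite /sz nth_cat hv. Qed.

Lemma soff_catr s1 s2 w : soff (s1 ++ s2) (size s1 + w) = (sumn s1 + soff s2 w)%N.
Proof. by rewrite /soff take_cat ltnNge leq_addr /= addKn sumn_cat. Qed.

Lemma sz_catr s1 s2 w : sz (s1 ++ s2) (size s1 + w) = sz s2 w.
Proof. by rewrite /sz nth_cat ltnNge leq_addr /= addKn. Qed.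

Lemma refines_flatten (parts : seq (seq nat)) :
  refines (flatten parts) (map sumn parts).
Proof.
elim: parts => [|p ps [IHs IH]] /=; first by split.
split; first by rewrite sumn_cat IHs.
move=> v hv hpos; rewrite /sub_strip; case: (ltnP v (size p)) => hvp.
  exists 0%N => //; rewrite soff0 soff_catl // sz_catl //; split => //.
  by rewrite -soffS /sz /= soff_le_sumn.
move: hv hpos; rewrite -(subnKC hvp) soff_catr sz_catr size_cat ltn_add2l.
move=> hw hpos; have [u hu [i1 i2]] := IH _ hw hpos.
by exists u.+1; rewrite // soff_cons /sz /=; rewrite /sz in i2 hpos; split; lia.
Qed.

Lemma sumn_filter_gt0 (x : seq nat) : sumn (filter (fun y => 0 < y)%N x) = sumn x.
Proof. by elim: x => //= a x IH; case: a => //= a; rewrite IH. Qed.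

Lemma subdiv_refines s (P1 : nat -> Prop) parts1 (P2 : nat -> Prop) parts2 s' :
  (forall i, (i < size s)%N -> P1 i -> sumn parts1 = sz s i) ->
  (forall i, (i < size s)%N -> P2 i -> sumn parts2 = sz s i) ->
  subdiv s P1 parts1 P2 parts2 s' -> refines s' s.
Proof.
move=> h1 h2 [parts [hsz [-> h]]].
suff -> : s = map sumn parts by exact: refines_flatten.
apply: (@eq_from_nth _ 0%N); first by rewrite size_map hsz.
move=> i hi; rewrite (nth_map [::]) ?hsz //.
have [e1 [e2 e3]] := h i hi.
case: (classic (P1 i)) => p1; first by rewrite e1 // sumn_filter_gt0 (h1 i hi p1).
case: (classic (P2 i)) => p2; first by rewrite e2 // sumn_filter_gt0 (h2 i hi p2).
by rewrite e3 //= addn0.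
Qed.

End Refinement.

Lemma sumn_telescope_decr (f : nat -> nat) i d :
  (forall j, (i <= j)%N -> (j < i + d)%N -> (f j.+1 <= f j)%N) ->
  sumn [seq (f j - f j.+1)%N | j <- iota i d] = (f i - f (i + d))%N /\
  (f (i + d) <= f i)%N.
Proof.
elim: d i => [|d IH] i h /=; first by rewrite addn0 subnn.
have [e1 e2] : sumn [seq (f j - f j.+1)%N | j <- iota i.+1 d] = (f i.+1 - f (i.+1 + d))%N /\
    (f (i.+1 + d) <= f i.+1)%N.
  by apply: IH => j hj1 hj2; apply: h; [exact: ltnW | rewrite -addSnnS].
have h0 : (f i.+1 <= f i)%N by apply: h; rewrite ?leqnn ?addnS ?ltnS ?leq_addr.
by rewrite e1 addSnnS; rewrite addSnnS in e2; split; lia.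
Qed.

Lemma sumn_std1 (ms : seq nat) : sorted geq ms -> sumn (std1 ms) = sumn ms.
Proof.
move=> hs; rewrite /std1 sumn_flatten -map_comp.
rewrite -[in RHS](mkseq_nth 0%N ms) /mkseq; congr sumn; apply/eq_in_map => i.
rewrite mem_iota add0n => /andP [_ hi] /=.
have geq_trans : transitive geq by move=> a b c h1 h2; exact: leq_trans h2 h1.
have hdecr j : (i <= j)%N -> (j < i + (size ms - i))%N ->
    (nth 0%N ms j.+1 <= nth 0%N ms j)%N.
  move=> hij hj; rewrite subnKC ?(ltnW hi) // in hj.
  case: (ltnP j.+1 (size ms)) => hj1; last by rewrite nth_default.
  have := @sorted_leq_nth _ geq geq_trans leqnn 0%N ms hs j j.+1.
  by rewrite !inE hj hj1 leqnSn => /(_ isT isT isT).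
have [-> _] := sumn_telescope_decr hdecr.
by rewrite subnKC ?(ltnW hi) // (nth_default _ (leqnn (size ms))) subn0.
Qed.

Lemma sumn_stdpart (k : closedFieldType) (lt : rel k) (data : seq (k * seq nat)) :
  weyr_ok lt data -> sumn (stdpart data) = weyr_size data.
Proof.
case/andP => _ /allP hall.
rewrite /stdpart sumn_filter_gt0 sumn_flatten -map_comp /weyr_size.
congr sumn; apply/eq_in_map => d hd /=; apply: sumn_std1.
by have /andP [/andP [_ ->] _] := hall d hd.
Qed.

(* By Cayley-Hamilton, [invmx S] is a polynomial in [S]. *)
Lemma invmx_closed (F : fieldType) N (P : 'M[F]_N -> Prop) :
  (forall A B, P A -> P B -> P (A + B)) -> (forall x A, P A -> P (x *: A)) ->
  (forall A B, P A -> P B -> P (A *m B)) -> P 1%:M ->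
  forall S, P S -> S \in unitmx -> P (invmx S).
Proof.
case: N P => [|n] P hD hZ hM h1 S hS hu.
  by have -> : invmx S = S by apply/matrixP => i; case: i.
have P_horner q : P (horner_mx S q).
  elim/poly_ind: q => [|q x IH].
    by rewrite rmorph0 -(scale0r (1%:M : 'M[F]_n.+1)); apply: hZ.
  rewrite rmorphD rmorphM /= horner_mx_X horner_mx_C -mulmxE.
  by apply: hD; [apply: hM | rewrite -scalemx1; apply: hZ].
set p := char_poly S.
have p_split : p = (p`_0)%:P + drop_poly 1 p * 'X.
  have <- : take_poly 1 p = (p`_0)%:P by apply/polyP => i; rewrite coefE coefC; case: i.
  by rewrite -['X]expr1 poly_take_drop.
have p0_neq0 : p`_0 != 0.
  by rewrite char_poly_det mulf_neq0 ?signr_eq0 // -unitfE -unitmxE.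
set Q := horner_mx S (drop_poly 1 p).
have QS : (- (p`_0)^-1 *: Q) *m S = 1%:M.
  have := Cayley_Hamilton S; rewrite -/p {1}p_split rmorphD rmorphM /=.
  rewrite horner_mx_X horner_mx_C -mulmxE -/Q => /eqP; rewrite addrC addr_eq0 => /eqP QS.
  by rewrite -scalemxAl QS scaleNr scalerN opprK scale_scalar_mx mulVf.
have -> : invmx S = - (p`_0)^-1 *: Q.
  by rewrite -[LHS]mul1mx -QS -mulmxA mulmxV // mulmx1.
exact/hZ/P_horner.
Qed.

Section Blocks.
Variable k : closedFieldType.

Lemma ent_ord N (A : 'M[k]_N) (i j : 'I_N) : ent A i j = A i j.
Proof. by rewrite /ent !valK. Qed.

Lemma ent_add N (A B : 'M[k]_N) p q : ent (A + B) p q = ent A p q + ent B p q.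
Proof.
by rewrite /ent; case: (insub p : option 'I_N) => [i|];
  case: (insub q : option 'I_N) => [j|]; rewrite ?mxE ?addr0.
Qed.

Lemma ent_scale N x (A : 'M[k]_N) p q : ent (x *: A) p q = x * ent A p q.
Proof.
by rewrite /ent; case: (insub p : option 'I_N) => [i|];
  case: (insub q : option 'I_N) => [j|]; rewrite ?mxE ?mulr0.
Qed.

Lemma ent1 N p q : ent (1%:M : 'M[k]_N) p q = ((p < N)%N && (p == q))%:R.
Proof.
rewrite /ent; case: insubP => [i _ <-|/negbTE ->] //.
case: insubP => [j _ <-|/negbTE hq]; first by rewrite mxE ltn_ord.
by rewrite ltn_ord /=; case: eqP => // e; rewrite -e ltn_ord in hq.
Qed.

Lemma ent_mul (s : seq nat) (A B : 'M[k]_(sumn s)) p q :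
  (p < sumn s)%N -> (q < sumn s)%N ->
  ent (A *m B) p q = \sum_(u < size s) \sum_(c < sz s u)
      ent A p (soff s u + c) * ent B (soff s u + c) q.
Proof.
move=> hp hq.
rewrite -[p]/(val (Ordinal hp)) -[q]/(val (Ordinal hq)) ent_ord mxE.
rewrite -(big_strips s (fun x => ent A (Ordinal hp) x * ent B x (Ordinal hq))).
by rewrite big_mkord; apply: eq_bigr => x _; rewrite !ent_ord.
Qed.

Lemma blk_mul (s : seq nat) (A B : 'M[k]_(sumn s)) i j a b :
  (a < sz s i)%N -> (b < sz s j)%N ->
  blk s (A *m B) i j a b =
  \sum_(u < size s) \sum_(c < sz s u) blk s A i u a c * blk s B u j c b.
Proof.
move=> ha hb; rewrite /blk ent_mul //.
  by rewrite (leq_trans _ (strip_end_le_sumn s i)) // ltn_add2l.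
by rewrite (leq_trans _ (strip_end_le_sumn s j)) // ltn_add2l.
Qed.

Definition slice (s : seq nat) (A : 'M[k]_(sumn s)) a b : 'M[k]_(size s) :=
  \matrix_(i, j) (if (a < sz s i)%N && (b < sz s j)%N then blk s A i j a b else 0).

Lemma slice_add (s : seq nat) (A B : 'M[k]_(sumn s)) a b :
  slice (A + B) a b = slice A a b + slice B a b.
Proof. by apply/matrixP => i j; rewrite !mxE /blk ent_add; case: ifP; rewrite ?addr0. Qed.

Lemma slice_scale (s : seq nat) x (A : 'M[k]_(sumn s)) a b :
  slice (x *: A) a b = x *: slice A a b.
Proof. by apply/matrixP => i j; rewrite !mxE /blk ent_scale; case: ifP; rewrite ?mulr0. Qed.

Lemma slice_mul (s : seq nat) (A B : 'M[k]_(sumn s)) a b :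
  slice (A *m B) a b = \sum_(c < sumn s) (slice A a c *m slice B c b).
Proof.
apply/matrixP => i j; rewrite summxE mxE.
under [RHS]eq_bigr do rewrite mxE.
case: ifP => [/andP [ha hb]|hab].
  rewrite blk_mul // exchange_big /=; apply: eq_bigr => u _.
  rewrite (big_ord_widen (sumn s) (fun c => blk s A i u a c * blk s B u j c b)
    (sz_le_sumn s u)) big_mkcond /=.
  apply: eq_bigr => c _; rewrite !mxE ha hb /=.
  by case: (c < sz s u)%N; rewrite ?mulr0 ?mul0r.
rewrite big1 // => c _; rewrite big1 // => u _; rewrite !mxE.
move: hab; case: (a < sz s i)%N => /= [->|_]; last by rewrite mul0r.
by rewrite andbF mulr0.
Qed.

Definition mxform t (d A : 'M[k]_t) : k := \sum_i \sum_j d i j * A i j.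

Lemma mxform0 t (d : 'M[k]_t) : mxform d 0 = 0.
Proof. by apply: big1 => i _; apply: big1 => j _; rewrite mxE mulr0. Qed.

Lemma mxformD t (d A B : 'M[k]_t) : mxform d (A + B) = mxform d A + mxform d B.
Proof.
rewrite /mxform -big_split; apply: eq_bigr => i _.
by rewrite -big_split; apply: eq_bigr => j _; rewrite mxE mulrDr.
Qed.

Lemma mxformZ t x (d A : 'M[k]_t) : mxform d (x *: A) = x * mxform d A.
Proof.
rewrite /mxform mulr_sumr; apply: eq_bigr => i _.
by rewrite mulr_sumr; apply: eq_bigr => j _; rewrite mxE mulrCA.
Qed.

Section LinearClosure.
Variables (t : nat) (E : rel 'I_t) (geqs meqs : seq 'M[k]_t).

Lemma Gamma0 : Gamma E geqs 0.
Proof.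
split; [|split] => [i j _|i j _|d _]; rewrite ?mxE //.
exact: mxform0.
Qed.

Lemma GammaD A B : Gamma E geqs A -> Gamma E geqs B -> Gamma E geqs (A + B).
Proof.
move=> [a1 [a2 a3]] [b1 [b2 b3]]; split; [|split].
- by move=> i j h; rewrite mxE a1 // b1 // addr0.
- by move=> i j h; rewrite !mxE (a2 _ _ h) (b2 _ _ h).
- move=> d hd; rewrite -[LHS]/(mxform d (A + B)) mxformD.
  by rewrite [mxform d A](a3 d hd) [mxform d B](b3 d hd) addr0.
Qed.

Lemma GammaZ x A : Gamma E geqs A -> Gamma E geqs (x *: A).
Proof.
move=> [a1 [a2 a3]]; split; [|split].
- by move=> i j h; rewrite mxE a1 // mulr0.
- by move=> i j h; rewrite !mxE (a2 _ _ h).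
- by move=> d hd; rewrite -[LHS]/(mxform d (x *: A)) mxformZ [mxform d A](a3 d hd) mulr0.
Qed.

Lemma Gamma_sum n (F : 'I_n -> 'M[k]_t) :
  (forall i, Gamma E geqs (F i)) -> Gamma E geqs (\sum_i F i).
Proof. by move=> h; apply: (big_ind (Gamma E geqs)); [exact: Gamma0|exact: GammaD|]. Qed.

Lemma Mset_sum n (F : 'I_n -> 'M[k]_t) :
  (forall i, Mset meqs (F i)) -> Mset meqs (\sum_i F i).
Proof.
move=> h; apply: (big_ind (Mset meqs)) => // [d _|A B hA hB d hd]; first exact: mxform0.
by rewrite -[LHS]/(mxform d (A + B)) mxformD [mxform d A](hA d hd) [mxform d B](hB d hd) addr0.
Qed.

End LinearClosure.

Section StepSequence.
Variables (s : seq nat) (E : rel 'I_(size s)) (geqs meqs : seq 'M[k]_(size s)).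
Hypothesis step_s : forall i j : 'I_(size s), E i j -> sz s i = sz s j.
Hypothesis geqs_ok : forall c, c \in geqs -> exists I J : 'I_(size s),
  forall i j : 'I_(size s), c i j != 0 -> [/\ E i I, E j J & (i < j)%N].
Hypothesis meqs_ok : forall d, d \in meqs -> exists I J : 'I_(size s),
  forall i j : 'I_(size s), d i j != 0 -> E i I /\ E j J.
Hypothesis Gamma_mul :
  forall A B, Gamma E geqs A -> Gamma E geqs B -> Gamma E geqs (A *m B).
Hypothesis GM : forall A m, Gamma E geqs A -> Mset meqs m -> Mset meqs (A *m m).
Hypothesis MG : forall A m, Gamma E geqs A -> Mset meqs m -> Mset meqs (m *m A).

Lemma mxform_slice (d : 'M[k]_(size s)) (A : 'M[k]_(sumn s)) a b :
  (forall i j : 'I_(size s), d i j != 0 -> (a < sz s i)%N && (b < sz s j)%N) ->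
  \sum_(i : 'I_(size s)) \sum_(j : 'I_(size s)) d i j * blk s A i j a b =
  mxform d (slice A a b).
Proof.
move=> h; apply: eq_bigr => i _; apply: eq_bigr => j _; rewrite mxE.
by have [->|/h ->] := eqVneq (d i j) 0; rewrite ?mul0r.
Qed.

(* Equations stay inside one pair of classes, on which all block sizes agree,
   so a blockwise equation either makes sense for the offsets (a, b) or is
   void for them. *)
Lemma blockwise_eqnP (d : 'M[k]_(size s)) (I J : 'I_(size s)) (A : 'M[k]_(sumn s)) a b :
  (forall i j : 'I_(size s), d i j != 0 -> E i I /\ E j J) ->
  ((forall i j : 'I_(size s), d i j != 0 -> (a < sz s i)%N && (b < sz s j)%N) ->
    \sum_(i : 'I_(size s)) \sum_(j : 'I_(size s)) d i j * blk s A i j a b = 0) <->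
  mxform d (slice A a b) = 0.
Proof.
move=> hIJ; case hab: ((a < sz s I)%N && (b < sz s J)%N).
  have hsz i j : d i j != 0 -> (a < sz s i)%N && (b < sz s j)%N.
    by move=> /hIJ [/step_s -> /step_s ->].
  by rewrite mxform_slice //; split => [/(_ hsz)|].
suff slice0 : mxform d (slice A a b) = 0.
  by split => // _ hsz; rewrite mxform_slice.
apply: big1 => i _; apply: big1 => j _.
have [->|/hIJ [/step_s ei /step_s ej]] := eqVneq (d i j) 0; first by rewrite mul0r.
by rewrite mxE ei ej hab mulr0.
Qed.

Lemma Gamma_nn_slice (S : 'M[k]_(sumn s)) :
  Gamma_nn E geqs S <-> forall a b, Gamma E geqs (slice S a b).
Proof.
split => [[h1 [h2 h3]] a b|h].
  split; [|split].
  - by move=> i j ji; rewrite mxE; case: ifP => // /andP [ha hb]; exact: h1.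
  - move=> i j e; rewrite !mxE (step_s e); case: ifP => // /andP [ha hb].
    by apply: h2; rewrite ?(step_s e).
  - move=> c hc; have [I [J hIJ]] := geqs_ok hc.
    by apply/(@blockwise_eqnP c I J) => [i j /hIJ []|]; [|exact: h3].
split; [|split].
- move=> i j ji a b ha hb; have [h1 _] := h a b.
  by have := h1 _ _ ji; rewrite mxE ha hb.
- move=> i j e a b ha hb; have [_ [h2 _]] := h a b.
  by have := h2 _ _ e; rewrite !mxE -(step_s e) ha hb.
- move=> c hc a b; have [I [J hIJ]] := geqs_ok hc; have [_ [_ h3]] := h a b.
  by apply/(@blockwise_eqnP c I J) => [i j /hIJ []|]; [|exact: h3].
Qed.

Lemma M_nn_slice (A : 'M[k]_(sumn s)) :
  M_nn meqs A <-> forall a b, Mset meqs (slice A a b).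
Proof.
by split => [h a b d hd|h d hd a b]; have [I [J hIJ]] := meqs_ok hd;
  apply/(@blockwise_eqnP d I J) => //; apply: h.
Qed.

Lemma Gamma_slice1 a b : Gamma E geqs (slice (1%:M : 'M[k]_(sumn s)) a b).
Proof.
have blk1_lt (i j : nat) a' b' : (i < j)%N -> (a' < sz s i)%N ->
    blk s (1%:M : 'M[k]_(sumn s)) i j a' b' = 0.
  move=> ij ha; have := strip_end_le s ij => hend.
  by rewrite /blk ent1 ltn_eqF ?andbF //; lia.
split; [|split].
- move=> i j ji; rewrite mxE; case: ifP => // /andP [ha hb].
  have := strip_end_le s ji => hend.
  by rewrite /blk ent1 eq_sym ltn_eqF ?andbF //; lia.
- move=> i j e; rewrite !mxE -(step_s e); case: ifP => // /andP [ha hb].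
  rewrite /blk !ent1 !eqn_add2l.
  have := strip_end_le_sumn s i; have := strip_end_le_sumn s j.
  by rewrite -(step_s e) => hj hi; congr ((_ && _)%:R); lia.
- move=> c hc; have [I [J hIJ]] := geqs_ok hc.
  apply: big1 => i _; apply: big1 => j _.
  have [->|/hIJ [_ _ ij]] := eqVneq (c i j) 0; first by rewrite mul0r.
  by rewrite mxE; case: ifP => [/andP [ha _]|]; rewrite ?blk1_lt ?mulr0.
Qed.

Lemma Gamma_nn_add (S T : 'M[k]_(sumn s)) :
  Gamma_nn E geqs S -> Gamma_nn E geqs T -> Gamma_nn E geqs (S + T).
Proof.
move=> /Gamma_nn_slice hS /Gamma_nn_slice hT; apply/Gamma_nn_slice => a b.
by rewrite slice_add; apply: GammaD.
Qed.

Lemma Gamma_nn_scale x (S : 'M[k]_(sumn s)) :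
  Gamma_nn E geqs S -> Gamma_nn E geqs (x *: S).
Proof.
move=> /Gamma_nn_slice hS; apply/Gamma_nn_slice => a b.
by rewrite slice_scale; apply: GammaZ.
Qed.

Lemma Gamma_nn_mul (S T : 'M[k]_(sumn s)) :
  Gamma_nn E geqs S -> Gamma_nn E geqs T -> Gamma_nn E geqs (S *m T).
Proof.
move=> /Gamma_nn_slice hS /Gamma_nn_slice hT; apply/Gamma_nn_slice => a b.
by rewrite slice_mul; apply: Gamma_sum => c; apply: Gamma_mul.
Qed.

Lemma Gamma_nn1 : Gamma_nn E geqs (1%:M : 'M[k]_(sumn s)).
Proof. by apply/Gamma_nn_slice => a b; apply: Gamma_slice1. Qed.

Lemma Gamma_nn_inv (S : 'M[k]_(sumn s)) :
  Gamma_nn E geqs S -> S \in unitmx -> Gamma_nn E geqs (invmx S).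
Proof.
apply: invmx_closed; [exact: Gamma_nn_add|exact: Gamma_nn_scale|
  exact: Gamma_nn_mul|exact: Gamma_nn1].
Qed.

Lemma M_nn_mull (S A : 'M[k]_(sumn s)) :
  Gamma_nn E geqs S -> M_nn meqs A -> M_nn meqs (S *m A).
Proof.
move=> /Gamma_nn_slice hS /M_nn_slice hA; apply/M_nn_slice => a b.
by rewrite slice_mul; apply: Mset_sum => c; apply: GM.
Qed.

Lemma M_nn_mulr (S A : 'M[k]_(sumn s)) :
  Gamma_nn E geqs S -> M_nn meqs A -> M_nn meqs (A *m S).
Proof.
move=> /Gamma_nn_slice hS /M_nn_slice hA; apply/M_nn_slice => a b.
by rewrite slice_mul; apply: Mset_sum => c; apply: MG.
Qed.

Lemma M_nn_conj (S A : 'M[k]_(sumn s)) :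
  Gamma_nn E geqs S -> S \in unitmx -> M_nn meqs A -> M_nn meqs (invmx S *m A *m S).
Proof. by move=> hS hu hA; apply/M_nn_mulr/M_nn_mull/hA/Gamma_nn_inv. Qed.

Section Elimination.
Variables (Nd : rel 'I_(size s)) (c : 'I_(size s) -> 'I_(size s) -> 'M[k]_(size s)).
Hypothesis Mset_elim : forall m, Mset meqs m <->
  (forall l r : 'I_(size s), Nd l r ->
     m l r = \sum_(i : 'I_(size s)) \sum_(j : 'I_(size s) | ~~ Nd i j) c l r i j * m i j).
Hypothesis elim_coef : forall l r i j : 'I_(size s), Nd l r -> ~~ Nd i j ->
  c l r i j != 0 -> [/\ E i l, E j r & lhd i j l r].

Lemma slice_dependentP (A : 'M[k]_(sumn s)) a b (l r : 'I_(size s)) : Nd l r ->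
  (slice A a b l r = \sum_(i : 'I_(size s)) \sum_(j : 'I_(size s) | ~~ Nd i j)
       c l r i j * slice A a b i j) <->
  ((a < sz s l)%N -> (b < sz s r)%N -> blk s A l r a b =
     \sum_(i : 'I_(size s)) \sum_(j : 'I_(size s) | ~~ Nd i j) c l r i j * blk s A i j a b).
Proof.
move=> hN; set cond := (a < sz s l)%N && (b < sz s r)%N.
have -> : \sum_(i : 'I_(size s)) \sum_(j : 'I_(size s) | ~~ Nd i j)
    c l r i j * slice A a b i j =
  if cond then \sum_(i : 'I_(size s)) \sum_(j : 'I_(size s) | ~~ Nd i j)
    c l r i j * blk s A i j a b else 0.
  have entry i j : ~~ Nd i j -> c l r i j * slice A a b i j =
      if cond then c l r i j * blk s A i j a b else 0.
    move=> hj; have [->|nz] := eqVneq (c l r i j) 0; first by rewrite !mul0r if_same.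
    have [ei ej _] := elim_coef hN hj nz.
    by rewrite mxE (step_s ei) (step_s ej) -/cond; case: ifP; rewrite ?mulr0.
  case: ifP => hcond.
    by apply: eq_bigr => i _; apply: eq_bigr => j hj; rewrite entry // hcond.
  by apply: big1 => i _; apply: big1 => j hj; rewrite entry // hcond.
rewrite mxE -/cond; case: ifP => [/andP [ha hb]|ncond]; first by split => [->|->].
by split => // _ ha hb; rewrite /cond ha hb in ncond.
Qed.

Lemma M_nn_dependentP (A : 'M[k]_(sumn s)) :
  M_nn meqs A <->
  (forall l r : 'I_(size s), Nd l r -> forall a b, (a < sz s l)%N -> (b < sz s r)%N ->
     blk s A l r a b =
     \sum_(i : 'I_(size s)) \sum_(j : 'I_(size s) | ~~ Nd i j) c l r i j * blk s A i j a b).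
Proof.
split => [/M_nn_slice hA l r hN a b|hA].
  by apply/(slice_dependentP A a b hN); move: (hA a b) => /Mset_elim; apply.
by apply/M_nn_slice => a b; apply/Mset_elim => l r hN; apply/slice_dependentP/hA.
Qed.

Variable lt : rel k.

Lemma reach_invariant (M0 : 'M[k]_(sumn s)) s' M' L' :
  M_nn meqs M0 -> reach lt s M0 (fun S => Gamma_nn E geqs S) s' M' L' ->
  [/\ refines s' s, M_nn meqs M' & forall S, L' S -> Gamma_nn E geqs S].
Proof.
move=> hM0; elim=> [|s1 M1 L1 s2 M2 L2 _ [hs1 hM1 hL1] step]; first by split=> //; exact: refines_refl.
have [l [r [_ [-> [S [hS [hu [-> cases]]]]]]]] := step.
split; last by move=> T [/hL1].
- apply: refines_trans hs1; case: cases => [[_ [_ [_ ->]]]|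
    [_ [_ [rk [hrk [_ hsub]]]]]|[_ [_ [data [hok [hsz [_ hsub]]]]]]].
  + exact: refines_refl.
  + by apply: subdiv_refines hsub => i _ [e _] /=; rewrite e; lia.
  + by apply: subdiv_refines hsub => // i _ [e _]; rewrite (sumn_stdpart hok) hsz e.
- exact: M_nn_conj (hL1 _ hS) hu hM1.
Qed.

Lemma dependent_block_stable s' (M' : 'M[k]_(sumn s)) L' l r (l0 r0 : 'I_(size s)) :
  refines s' s -> M_nn meqs M' -> (forall S, L' S -> Gamma_nn E geqs S) ->
  (forall l' r', (l' < size s')%N -> (r' < size s')%N ->
     (l < l')%N \/ l' = l /\ (r' < r)%N -> stable s' M' L' l' r') ->
  sub_strip s' l s l0 -> sub_strip s' r s r0 -> Nd l0 r0 -> stable s' M' L' l r.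
Proof.
move=> hs hM hL hprec hl hr hN S hS hu a b ha hb.
have hX : M_nn meqs (invmx S *m M' *m S) := M_nn_conj (hL _ hS) hu hM.
set p := (soff s' l + a)%N; set q := (soff s' r + b)%N.
set a0 := (p - soff s l0)%N; set b0 := (q - soff s r0)%N.
have [ha0 hb0] : (a0 < sz s l0)%N /\ (b0 < sz s r0)%N.
  by move: hl hr => [? ?] [? ?]; rewrite /a0 /b0 /p /q; lia.
have eblk Y : blk s' Y l r a b = blk s Y l0 r0 a0 b0.
  by move: hl hr => [? ?] [? ?]; rewrite /blk /a0 /b0 /p /q !subnKC //; lia.
rewrite !eblk (proj1 (M_nn_dependentP _) hX _ _ hN a0 b0 ha0 hb0).
rewrite (proj1 (M_nn_dependentP _) hM _ _ hN a0 b0 ha0 hb0).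
apply: eq_bigr => i _; apply: eq_bigr => j hj.
have [->|nz] := eqVneq (c l0 r0 i j) 0; first by rewrite !mul0r.
have [/step_s szi /step_s szj hlhd] := elim_coef hN hj nz; congr (_ * _).
set P := (soff s i + a0)%N; set Q := (soff s j + b0)%N.
have hiP : in_strip s i P by rewrite /in_strip /P szi; apply/andP; lia.
have hjQ : in_strip s j Q by rewrite /in_strip /Q szj; apply/andP; lia.
have [v hv hvP] : exists2 v, (v < size s')%N & in_strip s' v P.
  by apply: exists_in_strip; rewrite hs.1; have := strip_end_le_sumn s i; rewrite /P szi; lia.
have [w hw hwQ] : exists2 w, (w < size s')%N & in_strip s' w Q.
  by apply: exists_in_strip; rewrite hs.1; have := strip_end_le_sumn s j; rewrite /Q szj; lia.
have hlp : in_strip s' l p by rewrite /in_strip /p; apply/andP; lia.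
have := hprec v w hv hw (refines_precedes hs hv hw hl hr hlp erefl hiP hjQ hvP hwQ hlhd).
move: hvP hwQ => /andP [? ?] /andP [? ?].
move=> /(_ S hS hu (P - soff s' v)%N (Q - soff s' w)%N); rewrite /blk !subnKC //.
by apply; lia.
Qed.

Lemma nonstable_sz_gt0 N (s' : seq nat) (M : 'M[k]_N) L i j :
  ~ stable s' M L i j -> (0 < sz s' i)%N /\ (0 < sz s' j)%N.
Proof.
by move=> hns; rewrite !lt0n; split; apply/eqP => z; apply: hns => S _ _ a b; rewrite z.
Qed.

Lemma first_nonstable_sub_free (M0 : 'M[k]_(sumn s)) s' M' L' l r :
  M_nn meqs M0 -> reach lt s M0 (fun S => Gamma_nn E geqs S) s' M' L' ->
  firstns s' M' L' l r ->
  exists i j : 'I_(size s), [/\ ~~ Nd i j, sub_strip s' l s i & sub_strip s' r s j].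
Proof.
move=> hM0 hreach [hl [hr [hns hprec]]].
have [hs hM hL] := reach_invariant hM0 hreach.
have [szl szr] := nonstable_sz_gt0 hns.
have [l0 hl0 hsl] := hs.2 l hl szl; have [r0 hr0 hsr] := hs.2 r hr szr.
exists (Ordinal hl0), (Ordinal hr0); split => //; apply/negP => hN.
by apply: hns; apply: dependent_block_stable hs hM hL hprec _ _ hN.
Qed.

End Elimination.
End StepSequence.
End Blocks.

Unset Implicit Arguments.

Theorem lemma2p2
  (k : closedFieldType)
  (* the fixed linear order on k *)
  (lt : rel k)
  (lt_irr : forall x, ~~ lt x x)
  (lt_trans : forall x y z, lt x y -> lt y z -> lt x z)
  (lt_total : forall x y, x != y -> lt x y || lt y x)
  (t : nat)
  (* the basic matrix algebra Gamma: equivalence E and equations geqs *)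
  (E : rel 'I_t)
  (E_refl : forall i, E i i)
  (E_sym : forall i j, E i j -> E j i)
  (E_trans : forall i j l, E i j -> E j l -> E i l)
  (geqs : seq 'M[k]_t)
  (geqs_ok : forall c, c \in geqs -> exists I J : 'I_t,
      forall i j : 'I_t, c i j != 0 -> [/\ E i I, E j J & (i < j)%N])
  (Gamma_mul : forall A B, Gamma E geqs A -> Gamma E geqs B -> Gamma E geqs (A *m B))
  (* the space M, given by the system meqs *)
  (meqs : seq 'M[k]_t)
  (meqs_ok : forall d, d \in meqs -> exists I J : 'I_t,
      forall i j : 'I_t, d i j != 0 -> E i I /\ E j J)
  (GM : forall A m, Gamma E geqs A -> Mset meqs m -> Mset meqs (A *m m))
  (MG : forall A m, Gamma E geqs A -> Mset meqs m -> Mset meqs (m *m A))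
  (* result of Gauss--Jordan elimination: dependent positions Nd, coefficients c *)
  (Nd : rel 'I_t)
  (c : 'I_t -> 'I_t -> 'M[k]_t)
  (hGJ : forall m, Mset meqs m <->
      (forall l r : 'I_t, Nd l r ->
         m l r = \sum_(i : 'I_t) \sum_(j : 'I_t | ~~ Nd i j) c l r i j * m i j))
  (hc : forall l r i j : 'I_t, Nd l r -> ~~ Nd i j -> c l r i j != 0 ->
      [/\ E i l, E j r & lhd i j l r])
  (* a step-sequence *)
  (ns : seq nat)
  (ns_size : size ns = t)
  (ns_step : forall i j : 'I_t, E i j -> sz ns i = sz ns j) :
  (forall A : 'M[k]_(sumn ns), M_nn meqs A <->
     (forall l r : 'I_t, Nd l r -> forall a b, (a < sz ns l)%N -> (b < sz ns r)%N ->
        blk ns A l r a b =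
        \sum_(i : 'I_t) \sum_(j : 'I_t | ~~ Nd i j) c l r i j * blk ns A i j a b))
  /\
  (forall M : 'M[k]_(sumn ns), M_nn meqs M ->
   forall s' M' L', reach lt ns M (fun S => Gamma_nn E geqs S) s' M' L' ->
   forall l r, firstns s' M' L' l r ->
   exists i j : 'I_t, ~~ Nd i j /\
     (soff ns i <= soff s' l)%N /\ (soff s' l + sz s' l <= soff ns i + sz ns i)%N /\
     (soff ns j <= soff s' r)%N /\ (soff s' r + sz s' r <= soff ns j + sz ns j)%N).
Proof.
subst t; split; first exact: (fun A => M_nn_dependentP ns_step meqs_ok hGJ hc A).
move=> M hM s' M' L' hreach l r hfirst.
have [i [j [hfree [? ?] [? ?]]]] :=
  first_nonstable_sub_free ns_step geqs_ok meqs_ok Gamma_mul GM MG hGJ hc hM hreach hfirst.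
by exists i, j.
Qed.
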